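(* There is an absolute constant $C_0$ such that for every $C\ge C_0$ the following holds. Let $G$ be a finite group with $|G|\ge2$, $S\subseteq G$ symmetric, $H=\mathrm{Cay}(G,S)$ unweighted, and $\alpha>0$. Suppose $s_1,\dots,s_\ell\in\bar S$ and $v_1,\dots,v_\ell\in\mathbb{R}^G$ with $v_i^\top L_Hv_i>0$ satisfy $\mathrm{score}(s_i,v_i)\ge\alpha$ for all $i$ and $\mathrm{score}(s_i,v_j)\le\frac{\alpha}{C\log^2|G|}$ for all $1\le j<i\le\ell$. Then $\ell\le\log_2|G|$. More precisely, for $\ell'=\min(\ell,\lfloor\log_2|G|\rfloor+1)$, the products $\prod_{i\in T}s_i$ (taken in increasing order of index), for $T\subseteq[\ell']$, are pairwise distinct elements of $G$.
   Context: For $g\in G$, $A_g\in\{0,1\}^{G\times G}$ is the permutation matrix with $(A_g)_{u,v}=1$ iff $v=ug$. $S$ symmetric means $s\in S\Rightarrow s^{-1}\in S$; $\bar S\subseteq S$ contains exactly one element of each pair $\{s,s^{-1}\}$ with $s\neq s^{-1}$ and every $s\in S$ with $s=s^{-1}$. $L_s=2I-A_s-A_{s^{-1}}$ if $s\ne s^{-1}$, $L_s=I-A_s$ if $s=s^{-1}$; $L_H=\sum_{s\in\bar S}L_s$. For $v$ with $v^\top L_Hv>0$, $\mathrm{score}(s,v)=\frac{v^\top L_sv}{v^\top L_Hv}$. *)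

From HB Require Import structures.
From mathcomp Require Import all_boot all_order all_algebra all_fingroup.
From mathcomp Require Import reals exp.
Set Implicit Arguments. Unset Strict Implicit. Unset Printing Implicit Defensive.
Import Order.TTheory GRing.Theory Num.Theory.
Local Open Scope ring_scope.

Section CayleyDefs.
Variables (R : realType) (gT : finGroupType).

Definition Amx (g : gT) : gT -> gT -> R :=
  fun u w => if w == (u * g)%g then 1 else 0.

Definition Imx : gT -> gT -> R := fun u w => if w == u then 1 else 0.

Definition Lmx (s : gT) : gT -> gT -> R :=
  if s != (s^-1)%g then fun u w => 2 * Imx u w - Amx s u w - Amx (s^-1)%g u w
  else fun u w => Imx u w - Amx s u w.

Definition LHmx (Sbar : {set gT}) : gT -> gT -> R :=
  fun u w => \sum_(s in Sbar) Lmx s u w.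

Definition qform (M : gT -> gT -> R) (v : gT -> R) : R :=
  \sum_u \sum_w v u * M u w * v w.

Definition score (Sbar : {set gT}) (s : gT) (v : gT -> R) : R :=
  qform (Lmx s) v / qform (LHmx Sbar) v.

End CayleyDefs.

Definition symmetric_set (gT : finGroupType) (S : {set gT}) : Prop :=
  forall s, s \in S -> (s^-1)%g \in S.

Definition is_Sbar (gT : finGroupType) (S Sbar : {set gT}) : Prop :=
  Sbar \subset S /\
  forall s, s \in S ->
    if s == (s^-1)%g then s \in Sbar
    else (s \in Sbar) (+) ((s^-1)%g \in Sbar).

From HB Require Import structures.
From mathcomp Require Import all_boot all_order all_algebra all_fingroup.
From mathcomp Require Import reals exp.
From mathcomp Require Import ring lra zify.
Import Order.TTheory GRing.Theory Num.Theory.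
Local Open Scope ring_scope.
Set Implicit Arguments. Unset Strict Implicit. Unset Printing Implicit Defensive.

(* For v : G -> R and g in G let E_g(v) = sum_u (v u - v (u g))^2 be the energy of
   v along the g-edges.  Then E_g(v)/2 <= v^T L_g v <= E_g(v), E_(g^-1) = E_g, and
   E_(g_1 ... g_n)(v) <= n * sum_i E_(g_i)(v).  Suppose two different sets T1, T2 of
   indices below L = min(l, floor(log2 |G|) + 1) give the same product, and let k be
   the first index where they differ, say k in T1 \ T2.  Cancelling the common prefix
   writes s_k = B2 B1^-1, where each B_j is a product of fewer than L generators s_i
   with i > k, each of energy at most 2 eps Q_k against v_k (Q_k = v_k^T L_H v_k).
   Hence alpha Q_k <= v_k^T L_(s_k) v_k <= E_(s_k)(v_k) <= 8 L^2 eps Q_k, which is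
   impossible once eps = alpha / (C log^2 |G|) with C >= 200.  So the 2^L subproducts
   are distinct, 2^L <= |G|, and therefore l <= floor(log2 |G|). *)

Section EdgeEnergy.
Variables (R : realType) (gT : finGroupType).
Implicit Types (v : gT -> R) (g h : gT) (M N : gT -> gT -> R).

Definition edge_energy g v : R := \sum_u (v u - v (u * g)%g) ^+ 2.

Lemma sum_mulg g (F : gT -> R) : \sum_u F (u * g)%g = \sum_u F u.
Proof. by rewrite [RHS](reindex_inj (mulIg g)). Qed.

Lemma qformB M N v :
  qform (fun u w => M u w - N u w) v = qform M v - qform N v.
Proof.
rewrite /qform -sumrB; apply: eq_bigr => u _.
by rewrite -sumrB; apply: eq_bigr => w _; ring.
Qed.

Lemma qformZ (c : R) M v : qform (fun u w => c * M u w) v = c * qform M v.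
Proof.
rewrite /qform mulr_sumr; apply: eq_bigr => u _.
by rewrite mulr_sumr; apply: eq_bigr => w _; ring.
Qed.

Lemma qform_Imx v : qform (@Imx R gT) v = \sum_u v u ^+ 2.
Proof.
apply: eq_bigr => u _; rewrite (bigD1 u) //= /Imx eqxx big1 => [|w /negbTE ->].
  by rewrite addr0 mulr1 expr2.
by rewrite mulr0 mul0r.
Qed.

Lemma qform_Amx g v : qform (Amx R g) v = \sum_u v u * v (u * g)%g.
Proof.
apply: eq_bigr => u _; rewrite (bigD1 (u * g)%g) //= /Amx eqxx big1 => [|w /negbTE ->].
  by rewrite addr0 mulr1.
by rewrite mulr0 mul0r.
Qed.

Lemma edge_energyE g v :
  edge_energy g v = 2 * qform (@Imx R gT) v - 2 * qform (Amx R g) v.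
Proof.
rewrite qform_Imx qform_Amx.
have -> : 2 * \sum_u v u ^+ 2 = \sum_u (v u ^+ 2 + v (u * g)%g ^+ 2).
  by rewrite big_split /= (sum_mulg g (fun u => v u ^+ 2)); ring.
rewrite mulr_sumr -sumrB; apply: eq_bigr => u _; ring.
Qed.

Lemma qform_AmxV g v : qform (Amx R g^-1) v = qform (Amx R g) v.
Proof.
rewrite !qform_Amx -(sum_mulg g); apply: eq_bigr => u _.
by rewrite mulgK mulrC.
Qed.

Lemma edge_energy_ge0 g v : 0 <= edge_energy g v.
Proof. by apply: sumr_ge0 => u _; rewrite sqr_ge0. Qed.

Lemma edge_energy1 v : edge_energy 1 v = 0.
Proof. by apply: big1 => u _; rewrite mulg1 subrr expr0n. Qed.

Lemma edge_energyV g v : edge_energy g^-1 v = edge_energy g v.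
Proof. by rewrite !edge_energyE qform_AmxV. Qed.

Lemma qform_Lmx g v :
  qform (Lmx R g) v = if g != g^-1%g then edge_energy g v else edge_energy g v / 2.
Proof.
rewrite /Lmx edge_energyE; case: ifP => _; rewrite !qformB ?qformZ.
  by rewrite qform_AmxV; ring.
by field.
Qed.

Lemma qform_Lmx_le g v : qform (Lmx R g) v <= edge_energy g v.
Proof. by rewrite qform_Lmx; case: ifP => _ //; have := edge_energy_ge0 g v; lra. Qed.

Lemma edge_energy_le_qform_Lmx g v : edge_energy g v <= 2 * qform (Lmx R g) v.
Proof. by rewrite qform_Lmx; case: ifP => _; have := edge_energy_ge0 g v; lra. Qed.

(* Pointwise [m (a + b)^2 <= m (m + 1) a^2 + (m + 1) b^2], i.e. [(m a - b)^2 >= 0]. *)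
Lemma edge_energyM_weighted (m : R) g h v : 0 <= m ->
  m * edge_energy (g * h) v <= m * (m + 1) * edge_energy g v + (m + 1) * edge_energy h v.
Proof.
move=> m_ge0; rewrite /edge_energy -(sum_mulg g (fun u => (v u - v (u * h)%g) ^+ 2)).
rewrite !mulr_sumr -big_split /=; apply: ler_sum => u _.
have := sqr_ge0 (m * (v u - v (u * g)%g) - (v (u * g)%g - v (u * g * h)%g)).
rewrite mulgA; nra.
Qed.

Lemma edge_energyM g h v :
  edge_energy (g * h) v <= 2 * edge_energy g v + 2 * edge_energy h v.
Proof. by have := edge_energyM_weighted g h v ler01; lra. Qed.

Lemma edge_energy_prod_le (I : eqType) (r : seq I) (F : I -> gT) (c : R) v :
  (forall i, i \in r -> edge_energy (F i) v <= c) ->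
  edge_energy (\prod_(i <- r) F i) v <= (size r)%:R ^+ 2 * c.
Proof.
elim: r => [|i r IH] Fc; first by rewrite big_nil edge_energy1 expr0n mul0r.
have Fi : edge_energy (F i) v <= c by apply: Fc; rewrite mem_head.
have {IH}IH : edge_energy (\prod_(j <- r) F j) v <= (size r)%:R ^+ 2 * c.
  by apply: IH => j rj; apply: Fc; rewrite inE rj orbT.
rewrite big_cons /=; clear Fc; case: r IH => [|j r] IH; first by rewrite big_nil mulg1 expr1n mul1r.
set m := (size (j :: r))%:R : R.
have m_gt0 : 0 < m by rewrite ltr0n.
rewrite -/m mulrSr -(ler_pM2l m_gt0).
apply: le_trans (edge_energyM_weighted _ _ _ (ltW m_gt0)) _.
have m1_ge0 : 0 <= m + 1 by lra.
have := ler_wpM2l (mulr_ge0 (ltW m_gt0) m1_ge0) Fi.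
have := ler_wpM2l m1_ge0 IH.
nra.
Qed.

End EdgeEnergy.

Section DistinctSubproducts.
Variables (R : realType) (gT : finGroupType) (Sbar : {set gT}) (l L : nat).
Variables (s : 'I_l -> gT) (v : 'I_l -> gT -> R) (alpha eps : R).
Hypothesis L_le_l : (L <= l)%N.
Hypothesis qform_LH_gt0 : forall i, 0 < qform (LHmx R Sbar) (v i).
Hypothesis score_diag : forall i, alpha <= score Sbar (s i) (v i).
Hypothesis score_below : forall i j : 'I_l, (j < i)%N -> score Sbar (s i) (v j) <= eps.
Hypothesis eps_ge0 : 0 <= eps.
Hypothesis eps_small : 8 * L%:R ^+ 2 * eps < alpha.

Local Notation Q i := (qform (LHmx R Sbar) (v i)).
Implicit Types (T : {set 'I_l}).
Local Notation initial := [set i : 'I_l | (i < L)%N].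

(* The [i]-th factor of [\prod_(i in T) s i], extended by [1] beyond [l], so
   that products can be split with the interval lemmas of bigop. *)
Definition factor T (i : nat) : gT :=
  if insub i is Some j then (if j \in T then s j else 1%g) else 1%g.

Lemma factor_ord T (j : 'I_l) : factor T j = if j \in T then s j else 1%g.
Proof. by rewrite /factor valK. Qed.

Lemma prod_factor T : T \subset initial ->
  (\prod_(i in T) s i)%g = (\prod_(0 <= i < L) factor T i)%g.
Proof.
move=> T_init; rewrite big_mkcond /=.
under eq_bigr => j _ do rewrite -factor_ord.
rewrite -(big_mkord xpredT) (big_cat_nat (leq0n L) L_le_l) /=.
rewrite [X in (_ * X)%g]big1_seq ?mulg1 // => i /andP[_].
rewrite mem_index_iota /factor => /andP[Li _].
case: insubP => // j _ ji; case: ifP => // /(subsetP T_init).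
by rewrite inE ji ltnNge Li.
Qed.

Lemma qform_Lmx_diag (k : 'I_l) : alpha * Q k <= qform (Lmx R (s k)) (v k).
Proof. by rewrite -ler_pdivlMr // score_diag. Qed.

Lemma qform_Lmx_below (j k : 'I_l) : (k < j)%N -> qform (Lmx R (s j)) (v k) <= eps * Q k.
Proof. by move=> kj; rewrite -ler_pdivrMr // score_below. Qed.

Lemma edge_energy_tail T (k : 'I_l) :
  edge_energy (\prod_(k.+1 <= i < L) factor T i)%g (v k) <= L%:R ^+ 2 * (2 * (eps * Q k)).
Proof.
have c_ge0 : 0 <= 2 * (eps * Q k) by rewrite !mulr_ge0 // ltW.
apply: le_trans (edge_energy_prod_le (c := 2 * (eps * Q k)) _) _.
  move=> i; rewrite mem_index_iota /factor => /andP[ki _].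
  case: insubP => [j _ ji|_]; last by rewrite edge_energy1.
  case: ifP => _; last by rewrite edge_energy1.
  apply: le_trans (edge_energy_le_qform_Lmx _ _) _.
  by rewrite ler_pM2l // qform_Lmx_below // ji.
apply: ler_wpM2r => //; rewrite ler_sqr ?nnegrE ?ler0n // ler_nat size_iota; lia.
Qed.

Lemma prod_neq_at_first_difference T1 T2 (k : 'I_l) :
  T1 \subset initial -> T2 \subset initial -> k \in T1 -> k \notin T2 ->
  (forall j : 'I_l, (j < k)%N -> (j \in T1) = (j \in T2)) ->
  (\prod_(i in T1) s i)%g != (\prod_(i in T2) s i)%g.
Proof.
move=> T1_init T2_init kT1 kT2 agree; apply/eqP.
have kL : (k < L)%N by have := subsetP T1_init k kT1; rewrite inE.
rewrite !prod_factor // !(big_cat_nat (leq0n k) (ltnW kL)) /= !(big_ltn kL).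
rewrite (@eq_big_nat _ _ _ 0 k _ (factor T2)); last first.
  move=> i /andP[_ ik]; rewrite /factor; case: insubP => // j _ ji.
  by rewrite agree ?ji.
move/mulgI; rewrite !factor_ord kT1 (negbTE kT2) mul1g.
set B1 := (\prod_(k.+1 <= i < L) factor T1 i)%g.
set B2 := (\prod_(k.+1 <= i < L) factor T2 i)%g => sB1.
have sk : s k = (B2 * B1^-1)%g by rewrite -sB1 mulgK.
have := edge_energyM B2 B1^-1 (v k); rewrite edge_energyV -sk.
have := qform_Lmx_le (s k) (v k); have := qform_Lmx_diag k.
have := edge_energy_tail T1 k; have := edge_energy_tail T2 k; rewrite -/B1 -/B2.
have : 8 * L%:R ^+ 2 * eps * Q k < alpha * Q k by rewrite ltr_pM2r.
lra.
Qed.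

Lemma subproduct_inj T1 T2 : T1 \subset initial -> T2 \subset initial ->
  (\prod_(i in T1) s i)%g = (\prod_(i in T2) s i)%g -> T1 = T2.
Proof.
move=> T1_init T2_init eq12.
case: (pickP (fun j => (j \in T1) != (j \in T2))) => [j0 dj0 | same]; last first.
  by apply/setP => j; have := same j; case: (j \in T1); case: (j \in T2).
case: (arg_minnP (P := fun j => (j \in T1) != (j \in T2)) val dj0) => k dk min_k.
have agree (j : 'I_l) : (j < k)%N -> (j \in T1) = (j \in T2).
  by move=> jk; apply/eqP; apply: contraTT jk => dj; rewrite -leqNgt min_k.
have [kT1|kT1] := boolP (k \in T1).
- have kT2 : k \notin T2 by move: dk; rewrite kT1; case: (k \in T2).
  by have := prod_neq_at_first_difference T1_init T2_init kT1 kT2 agree; rewrite eq12 eqxx.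
- have kT2 : k \in T2 by move: dk; rewrite (negbTE kT1); case: (k \in T2).
  have agree21 (j : 'I_l) : (j < k)%N -> (j \in T2) = (j \in T1) by move/agree.
  by have := prod_neq_at_first_difference T2_init T1_init kT2 kT1 agree21; rewrite eq12 eqxx.
Qed.

End DistinctSubproducts.

Lemma card_powerset_le (aT rT : finType) (A : {set aT}) (f : {set aT} -> rT) :
  {in powerset A &, injective f} -> (2 ^ #|A| <= #|rT|)%N.
Proof. by move=> f_inj; rewrite -card_powerset -(card_in_imset f_inj) max_card. Qed.

Lemma card_ord_lt n m : (m <= n)%N -> #|[set i : 'I_n | (i < m)%N]| = m.
Proof.
move=> le_mn; have widen_inj : injective (widen_ord le_mn).
  by move=> i j /(congr1 val) ij; apply: val_inj.
rewrite -[RHS](card_ord m) -(card_imset _ widen_inj); apply: eq_card => i.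
rewrite inE; apply/idP/imsetP => [i_lt_m | [j _ ->]]; last exact: (ltn_ord j).
by exists (Ordinal i_lt_m) => //; apply: val_inj.
Qed.

Lemma half_le_ln2 (R : realType) : 1 / 2 <= ln (2 : R).
Proof. by have := expR_ge1Dx (- ln (2 : R)); rewrite expRN lnK ?posrE //; lra. Qed.

Lemma trunc_log2_le_ln (R : realType) n : (0 < n)%N ->
  (trunc_log 2 n)%:R * ln (2 : R) <= ln (n%:R : R).
Proof.
move=> n_gt0; rewrite mulr_natl -lnXn // ler_ln ?posrE ?exprn_gt0 ?ltr0n //.
by rewrite -natrX ler_nat trunc_logP.
Qed.

Lemma trunc_log2S_sqr_lt (R : realType) n : (2 <= n)%N ->
  8 * (trunc_log 2 n).+1%:R ^+ 2 < 200 * ln (n%:R : R) ^+ 2.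
Proof.
move=> n_ge2.
have t_ge1 : 1 <= (trunc_log 2 n)%:R :> R by rewrite ler1n; apply: trunc_log_max.
have t_le := trunc_log2_le_ln R (ltnW n_ge2).
have t_half := ler_wpM2l (ler0n R (trunc_log 2 n)) (half_le_ln2 R).
rewrite -natr1; move: t_ge1 t_le t_half.
set t := (trunc_log 2 n)%:R; set lnn := ln (n%:R : R) => t_ge1 t_le t_half.
have : (t / 2) ^+ 2 <= lnn ^+ 2 by rewrite ler_sqr ?nnegrE; lra.
nra.
Qed.

Theorem mainTheorem6 :
  exists C0 : nat,
  forall (R : realType) (C : R), (C0%:R <= C) ->
  forall (gT : finGroupType) (S Sbar : {set gT}) (alpha : R) (l : nat)
         (s : 'I_l -> gT) (v : 'I_l -> gT -> R),
    (2 <= #|gT|)%N ->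
    symmetric_set S ->
    is_Sbar S Sbar ->
    0 < alpha ->
    (forall i, s i \in Sbar) ->
    (forall i, 0 < qform (LHmx R Sbar) (v i)) ->
    (forall i, alpha <= score Sbar (s i) (v i)) ->
    (forall i j : 'I_l, (j < i)%N ->
       score Sbar (s i) (v j) <= alpha / (C * ln (#|gT|%:R : R) ^+ 2)) ->
    (l%:R <= ln (#|gT|%:R : R) / ln 2) /\
    (forall T1 T2 : {set 'I_l},
       T1 \subset [set i : 'I_l | (i < minn l (trunc_log 2 #|gT|).+1)%N] ->
       T2 \subset [set i : 'I_l | (i < minn l (trunc_log 2 #|gT|).+1)%N] ->
       (\prod_(i in T1) s i)%g = (\prod_(i in T2) s i)%g -> T1 = T2).
Proof.
exists 200%N => R C C_ge gT S Sbar alpha l s v N_ge2 _ _ alpha_gt0 _ qform_gt0 diag below.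
set N := #|gT| in N_ge2 below *; set t := trunc_log 2 N; set L := minn l t.+1.
have lnN_gt0 : 0 < ln (N%:R : R) by rewrite ln_gt0 // ltr1n.
have D_gt0 : 0 < C * ln (N%:R : R) ^+ 2.
  by rewrite mulr_gt0 ?exprn_gt0 //; apply: lt_le_trans C_ge; rewrite ltr0n.
have eps_small : 8 * L%:R ^+ 2 * (alpha / (C * ln (N%:R : R) ^+ 2)) < alpha.
  rewrite mulrA ltr_pdivrMr // mulrC ltr_pM2l //.
  apply: (@le_lt_trans _ _ (8 * t.+1%:R ^+ 2)).
    by rewrite ler_pM2l // ler_sqr ?nnegrE ?ler0n // ler_nat geq_minr.
  apply: lt_le_trans (trunc_log2S_sqr_lt R N_ge2) _.
  by rewrite ler_pM2r ?exprn_gt0.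
have eps_ge0 : 0 <= alpha / (C * ln (N%:R : R) ^+ 2) by rewrite divr_ge0 ?ltW.
have inj := subproduct_inj (geq_minl l t.+1) qform_gt0 diag below eps_ge0 eps_small.
split; last exact: inj.
have l_le_t : (l <= t)%N.
  rewrite leqNgt; apply/negP => t_lt_l.
  have f_inj : {in powerset [set i : 'I_l | (i < L)%N] &,
                injective (fun T : {set 'I_l} => (\prod_(i in T) s i)%g)}.
    by move=> T1 T2; rewrite !powersetE; apply: inj.
  have := card_powerset_le f_inj; rewrite card_ord_lt ?geq_minl // -/N.
  have -> : L = t.+1 by rewrite /L; lia.
  by rewrite leqNgt trunc_log_ltn.
rewrite ler_pdivlMr ?ln_gt0 ?ltr1n //; apply: le_trans (trunc_log2_le_ln R (ltnW N_ge2)).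
by rewrite ler_pM2r ?ln_gt0 ?ltr1n // ler_nat.
Qed.
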